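(* Let $\mathbb{X}$ be a finite-dimensional strictly convex real Banach space and $\mathbb{Y}$ a finite-dimensional smooth real Banach space (both of dimension greater than $1$). Let $T\in\mathbb{L}(\mathbb{X},\mathbb{Y})$ with $\|T\|=1$. Then $T$ is a smooth point of $\mathbb{L}(\mathbb{X},\mathbb{Y})$ if and only if for every $\epsilon>0$, $T$ admits a uniform $\epsilon$-BPB approximation $A\neq T$ which is itself a smooth point of $\mathbb{L}(\mathbb{X},\mathbb{Y})$.
   Context: $\mathbb{L}(\mathbb{X},\mathbb{Y})$ is the space of linear operators with the operator norm; $S_{\mathbb{X}}$ is the unit sphere. $\mathbb{X}$ is strictly convex if every point of $S_{\mathbb{X}}$ is an extreme point of the unit ball. A nonzero element $x$ of a Banach space $\mathbb{Z}$ is a smooth point if there is a unique $f\in\mathbb{Z}^*$ with $\|f\|=1$ and $f(x)=\|x\|$; $\mathbb{Y}$ is smooth if all its nonzero points are smooth. For $T$ with $\|T\|=1$ and fixed $\epsilon>0$, an operator $A\in\mathbb{L}(\mathbb{X},\mathbb{Y})$ with $\|A\|=1$ is a uniform $\epsilon$-BPB approximation of $T$ if there exists $\delta(\epsilon)>0$ such that whenever $x_0\in S_{\mathbb{X}}$ satisfies $\|Tx_0\|>1-\delta(\epsilon)$, there exists $u_0\in S_{\mathbb{X}}$ with $\|Au_0\|=1$, $\|u_0-x_0\|<\epsilon$ and $\|A-T\|<\epsilon$. *)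

From HB Require Import structures.
From mathcomp Require Import all_boot all_order all_algebra.
From mathcomp Require Import all_classical all_reals all_analysis.
Set Implicit Arguments. Unset Strict Implicit. Unset Printing Implicit Defensive.
Import Order.TTheory GRing.Theory Num.Theory.
Import numFieldNormedType.Exports.
Local Open Scope classical_set_scope.
Local Open Scope ring_scope.

Section Defs.
Variable R : realType.

Definition findim (V : lmodType R) : Prop :=
  exists (n : nat) (e : 'I_n -> V),
    forall x : V, exists c : 'I_n -> R, x = \sum_(i < n) c i *: e i.

Definition dim_gt1 (V : lmodType R) : Prop :=
  ~ (exists v : V, forall x : V, exists c : R, x = c *: v).

Section Normed.
Variable Z : normedModType R.

Definition unit_ball : set Z := [set x | `|x| <= 1].

Definition extreme_point_ball (x : Z) : Prop :=
  `|x| <= 1 /\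
  forall (y z : Z) (t : R), `|y| <= 1 -> `|z| <= 1 -> 0 < t < 1 ->
    x = t *: y + (1 - t) *: z -> y = z.

Definition strictly_convex : Prop :=
  forall x : Z, `|x| = 1 -> extreme_point_ball x.

Definition dual_elt (f : Z -> R) : Prop :=
  (forall (a : R) (x y : Z), f (a *: x + y) = a * f x + f y) /\
  (exists M : R, forall x : Z, `|f x| <= M * `|x|).

Definition dual_norm (f : Z -> R) : R := sup [set `|f x| | x in unit_ball].

Definition norming_functional (z : Z) (f : Z -> R) : Prop :=
  dual_elt f /\ dual_norm f = 1 /\ f z = `|z|.

Definition smooth_point (z : Z) : Prop :=
  z != 0 /\ exists! f : Z -> R, norming_functional z f.

Definition smooth_space : Prop := forall z : Z, z != 0 -> smooth_point z.
End Normed.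

Section Operators.
Variables X Y : normedModType R.

(* elements of L(X,Y), represented as functions X -> Y that are linear *)
Definition is_op (T : X -> Y) : Prop :=
  forall (a : R) (x y : X), T (a *: x + y) = a *: T x + T y.

Definition opnorm (T : X -> Y) : R := sup [set `|T x| | x in unit_ball (Z:=X)].

Definition op_dual_elt (Phi : (X -> Y) -> R) : Prop :=
  (forall (a : R) (A B : X -> Y), is_op A -> is_op B ->
     Phi (fun x => a *: A x + B x) = a * Phi A + Phi B) /\
  (exists M : R, forall A : X -> Y, is_op A -> `|Phi A| <= M * opnorm A).

Definition op_dual_norm (Phi : (X -> Y) -> R) : R :=
  sup [set `|Phi A| | A in [set A : X -> Y | is_op A /\ opnorm A <= 1]].

Definition op_norming_functional (T : X -> Y) (Phi : (X -> Y) -> R) : Prop :=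
  op_dual_elt Phi /\ op_dual_norm Phi = 1 /\ Phi T = opnorm T.

(* smooth point of L(X,Y): nonzero, with a unique norming functional
   (functionals are identified when they agree on L(X,Y)) *)
Definition op_smooth_point (T : X -> Y) : Prop :=
  is_op T /\ (exists x : X, T x != 0) /\
  (exists Phi, op_norming_functional T Phi) /\
  (forall Phi1 Phi2, op_norming_functional T Phi1 ->
     op_norming_functional T Phi2 ->
     forall A : X -> Y, is_op A -> Phi1 A = Phi2 A).

Definition uniform_BPB_approx (T A : X -> Y) (eps : R) : Prop :=
  is_op A /\ opnorm A = 1 /\
  exists delta : R, 0 < delta /\
    forall x0 : X, `|x0| = 1 -> `|T x0| > 1 - delta ->
      exists u0 : X, `|u0| = 1 /\ `|A u0| = 1 /\ `|u0 - x0| < eps /\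
                     opnorm (fun x => A x - T x) < eps.
End Operators.
End Defs.

From HB Require Import structures.
From mathcomp Require Import all_boot all_order all_algebra.
From mathcomp Require Import all_classical all_reals all_analysis.
From mathcomp Require Import ring lra.
Import Order.TTheory GRing.Theory Num.Theory.
Import numFieldNormedType.Exports.
Local Open Scope classical_set_scope.
Local Open Scope ring_scope.
Set Implicit Arguments. Unset Strict Implicit. Unset Printing Implicit Defensive.

(** With [X] finite dimensional and [Y] smooth, a norm-one operator [T] is a
    smooth point of L(X,Y) exactly when it attains its norm on the unit sphere
    only at a pair [x0], [-x0].  If [T] attains its norm at a unit vector [u]
    and [g] norms [T u], then [B |-> g (B u)] norms [T]; for two norm-attaining
    vectors that are not opposite or equal these functionals differ on a
    rank-one operator.  Conversely, if [T] attains its norm only at [+-x0],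
    compactness forces almost-norming vectors to lie near [+-x0]; hence every
    norming functional of [T] kills the operators vanishing at [x0], factors
    through evaluation at [x0], and is pinned down by the unique norming
    functional of [T x0].

    For the theorem, with [f = g \o T], a smooth [T] is approximated by
    [(1 - t) T + t f(.) T x0], which again attains its norm only at [+-x0]; if
    [T = f(.) T x0] has rank one, [T x0] is replaced instead by a nearby unit
    vector, which exists since [dim Y > 1].  These are uniform BPB
    approximations because the almost-norming vectors of [T] lie near [+-x0].
    Conversely, if [T] attained its norm at some [x1] other than [+-x0], a
    smooth BPB approximation would attain its norm near [x0] and near [x1], at
    points that must be [+-] each other. *)

Lemma closed_level (R : realType) (T : topologicalType) (f : T -> R) (D : set R) :
  continuous f -> closed D -> closed [set x | D (f x)].
Proof. by move=> cf; apply: preimage_closed => x _; exact: cf. Qed.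

Lemma closed_norm_le (R : realType) (V : normedModType R) (r : R) :
  closed [set v : V | `|v| <= r].
Proof.
by apply: (@closed_level _ _ (fun v : V => `|v|) [set s | s <= r]);
  [exact: norm_continuous | exact: closed_le].
Qed.

Lemma rV_coord_le (R : realType) n (v : 'rV[R]_n) i : `|v ord0 i| <= `|v|.
Proof.
rewrite -[`|v|]/(mx_norm v) mx_normrE.
exact: (le_bigmax _ (fun ij : 'I_1 * 'I_n => `|v ij.1 ij.2|) (ord0, i)).
Qed.

Lemma unit_neq0 (R : realType) (Z : normedModType R) (z : Z) : `|z| = 1 -> z != 0.
Proof. by move=> nz; rewrite -normr_eq0 nz oner_eq0. Qed.

Lemma eq_or_eq_opp_of_near (R : realType) (Z : normedModType R) (a b : Z) :
  (forall e, 0 < e -> `|a - b| < e \/ `|a + b| < e) -> a = b \/ a = - b.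
Proof.
move=> near; apply: contrapT => /not_orP[ab ab'].
have e0 : 0 < Num.min `|a - b| `|a + b|.
  by rewrite lt_min !normr_gt0 subr_eq0 addr_eq0; apply/andP; split; apply/eqP.
by case: (near _ e0); rewrite lt_min ltxx ?andbF.
Qed.

Lemma exists_unit_near (R : realType) (Y : normedModType R) (y0 : Y) e :
  dim_gt1 Y -> `|y0| = 1 -> 0 < e -> exists y, [/\ `|y| = 1, y != y0 & `|y - y0| < e].
Proof.
move=> dY ny0 e0.
have [w wy0] : exists w, forall c, w != c *: y0.
  apply: contrapT => none; apply: dY; exists y0 => y; apply: contrapT => ny.
  by apply: none; exists y => c; apply/eqP => yc; apply: ny; exists c.
have w1 : 0 < 2 * (`|w| + 1) by rewrite mulr_gt0 // ltr_wpDl.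
pose s := e / (2 * (`|w| + 1)).
have s0 : 0 < s by rewrite divr_gt0.
have es : s * (2 * (`|w| + 1)) = e by rewrite divfK ?gt_eqF.
pose z := y0 + s *: w.
have wE c : s *: w = c *: y0 -> False.
  move=> swE; move: (wy0 (c / s)); rewrite -(inj_eq (scalerI (lt0r_neq0 s0))).
  by rewrite swE scalerA mulrC divfK ?gt_eqF ?eqxx.
have nz : 0 < `|z|.
  rewrite normr_gt0; apply/negP => /eqP z0; apply: (wE (-1)).
  by apply/eqP; rewrite scaleN1r -addr_eq0 addrC; apply/eqP.
have zy0 : `|z - y0| = s * `|w| by rewrite /z addrAC subrr add0r normrZ gtr0_norm.
have nz1 : `| `|z| - 1| <= s * `|w| by rewrite -ny0 -zy0 ler_dist_dist.
exists (`|z|^-1 *: z); split.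
- by rewrite normrZ normrV ?unitfE ?gt_eqF // normr_id mulVf ?gt_eqF.
- apply/eqP => yE; apply: (wE (`|z| - 1)).
  by rewrite scalerBl scale1r -{1}yE scalerA mulfV ?gt_eqF // scale1r /z addrAC subrr add0r.
- have -> : `|z|^-1 *: z - y0 = (`|z|^-1 - 1) *: z + (z - y0).
    by rewrite scalerBl scale1r addrA subrK.
  apply: le_lt_trans (ler_normD _ _) _; rewrite zy0 normrZ -{2}(gtr0_norm nz).
  rewrite -normrM mulrBl mulVf ?gt_eqF // mul1r distrC.
  have : 0 <= s * `|w| by rewrite mulr_ge0 // ltW.
  lra.
Qed.

Section Operators.
Variables (R : realType) (X Y : normedModType R).
Implicit Types (A B : X -> Y) (x : X).

Definition linear_of B (hB : is_op B) : {linear X -> Y} :=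
  HB.pack B (GRing.isLinear.Build R X Y *:%R B hB).

Section LinearOp.
Variables (B : X -> Y) (hB : is_op B).

Lemma op0 : B 0 = 0. Proof. exact: (linear0 (linear_of hB)). Qed.
Lemma opD x y : B (x + y) = B x + B y. Proof. exact: (linearD (linear_of hB)). Qed.
Lemma opB x y : B (x - y) = B x - B y. Proof. exact: (linearB (linear_of hB)). Qed.
Lemma opN x : B (- x) = - B x. Proof. exact: (linearN (linear_of hB)). Qed.
Lemma opZ a x : B (a *: x) = a *: B x. Proof. exact: (linearZZ (linear_of hB)). Qed.
Lemma op_sum n (F : 'I_n -> X) : B (\sum_(i < n) F i) = \sum_(i < n) B (F i).
Proof. exact: (linear_sum (linear_of hB)). Qed.

End LinearOp.

Lemma scalar_comp (g : Y -> R) B : scalar g -> is_op B -> scalar (fun x => g (B x)).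
Proof. by move=> lin_g hB a x y; rewrite /= hB lin_g. Qed.

Lemma is_op0 : is_op (fun _ : X => 0 : Y).
Proof. by move=> a x y; rewrite scaler0 addr0. Qed.

Lemma is_op_comb A B a : is_op A -> is_op B -> is_op (fun x => a *: A x + B x).
Proof.
move=> hA hB c x y; rewrite hA hB scalerDr !scalerA (mulrC a c) -!scalerA.
by rewrite scalerDr addrACA.
Qed.

Lemma is_op_scale B a : is_op B -> is_op (fun x => a *: B x).
Proof. by move=> hB c x y; rewrite hB scalerDr !scalerA mulrC. Qed.

Lemma is_op_rank_one (f : X -> R) (y : Y) : scalar f -> is_op (fun x => f x *: y).
Proof. by move=> lin_f a x x'; rewrite lin_f scalerDl scalerA. Qed.

Definition bounded_op B := exists M, forall x, `|B x| <= M * `|x|.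

Lemma bounded_op_continuous B : is_op B -> bounded_op B -> continuous B.
Proof.
move=> hB [M hM].
suff /bounded_linear_continuous : bounded_near (linear_of hB) (nbhs 0) by [].
apply/bounded_funP => r; exists (`|M| * `|r|) => x xr /=.
apply: le_trans (hM x) _; apply: le_trans (ler_norm _) _.
by rewrite normrM ler_wpM2l // normr_id (le_trans xr) // ler_norm.
Qed.

Lemma opnorm_ub B : bounded_op B -> forall x, `|x| <= 1 -> `|B x| <= opnorm B.
Proof.
move=> [M hM] x x1; apply: ub_le_sup; last by exists x.
exists `|M| => _ [y y1 <-]; apply: le_trans (hM y) _.
by apply: le_trans (ler_wpM2r (normr_ge0 _) (ler_norm M)) _; rewrite ler_piMr.
Qed.

Lemma opnorm_le B k : (forall x, `|x| <= 1 -> `|B x| <= k) -> opnorm B <= k.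
Proof.
move=> Bk; apply: ge_sup; last by move=> _ [y y1 <-]; exact: Bk.
by exists `|B 0|, 0; rewrite // /unit_ball /= normr0.
Qed.

Lemma opnorm_ge0 B : bounded_op B -> 0 <= opnorm B.
Proof. by move=> bB; apply: le_trans (opnorm_ub bB (x := 0) _); rewrite ?normr0. Qed.

Lemma opnorm_bound B : is_op B -> bounded_op B -> forall x, `|B x| <= opnorm B * `|x|.
Proof.
move=> hB bB x; have [->|x0] := eqVneq x 0; first by rewrite op0 // !normr0 mulr0.
have nx : 0 < `|x| by rewrite normr_gt0.
have := opnorm_ub bB (x := `|x|^-1 *: x); rewrite opZ // !normrZ normrV ?unitfE ?normr_eq0 //.
by rewrite normr_id mulVf ?normr_eq0 // mulrC ler_pdivrMr // => ->.
Qed.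

Lemma opnorm1_le B : is_op B -> bounded_op B -> opnorm B = 1 -> forall x, `|B x| <= `|x|.
Proof. by move=> hB bB nB x; rewrite -[`|x|]mul1r -nB; exact: opnorm_bound. Qed.

Lemma opnorm1_attained B u : (forall x, `|B x| <= `|x|) -> `|u| = 1 -> `|B u| = 1 ->
  opnorm B = 1.
Proof.
move=> B_le nu nBu; apply/eqP; rewrite eq_le opnorm_le => [|x /(le_trans (B_le x))] //.
by rewrite -[X in X <= _]nBu opnorm_ub ?nu //; exists 1 => x; rewrite mul1r.
Qed.

Lemma op_dual_norm_le (Phi : (X -> Y) -> R) k :
  (forall A, is_op A -> opnorm A <= 1 -> `|Phi A| <= k) -> op_dual_norm Phi <= k.
Proof.
move=> Phik; apply: ge_sup; last by move=> _ [A [hA nA] <-]; exact: Phik.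
exists `|Phi (fun _ => 0)|, (fun _ => 0) => //; split; first exact: is_op0.
by apply: opnorm_le => x _; rewrite normr0.
Qed.

(* For [opnorm A = 1]: the norm attainment set [M_A] of the paper is [{x0, -x0}]. *)
Definition norm_attained_only_at A x0 : Prop :=
  [/\ `|x0| = 1, `|A x0| = 1 &
      forall x, `|x| = 1 -> `|A x| = 1 -> x = x0 \/ x = - x0].

End Operators.

Arguments is_op0 {R X Y}.

Lemma scalar_funZ (R : realType) (Z : normedModType R) (g : Z -> R) :
  scalar g -> forall a z, g (a *: z) = a * g z.
Proof. by move=> lin_g; exact: (opZ (Y := R^o) lin_g). Qed.

Lemma norming_functional_le (R : realType) (Z : normedModType R) (z : Z) g :
  norming_functional z g -> forall y, `|g y| <= `|y|.
Proof. by case=> [[lin_g bdd_g] [ng _]]; exact: (opnorm1_le (Y := R^o) lin_g). Qed.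

Section Combination.
Variables (R : realType) (X : normedModType R).

Definition comb n (e : 'I_n -> X) (v : 'rV[R]_n) : X := \sum_(i < n) v ord0 i *: e i.

Variables (n : nat) (e : 'I_n -> X).

Lemma comb_is_op : is_op (comb e).
Proof.
move=> a v w; rewrite /comb scaler_sumr -big_split; apply: eq_bigr => i _ /=.
by rewrite !mxE scalerDl scalerA.
Qed.

Lemma norm_comb_le v : `|comb e v| <= (\sum_(i < n) `|e i|) * `|v|.
Proof.
rewrite /comb mulr_suml; apply: le_trans (ler_norm_sum _ _ _) _.
by apply: ler_sum => i _; rewrite normrZ mulrC ler_wpM2l // rV_coord_le.
Qed.

Lemma comb_continuous : continuous (comb e).
Proof. exact: bounded_op_continuous comb_is_op (ex_intro _ _ norm_comb_le). Qed.

End Combination.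

Section FiniteDimensional.
Variables (R : realType) (X : normedModType R).
Hypothesis fdX : findim X.

Lemma findim_basis : exists n (e : 'I_n -> X),
  (forall x, exists v, comb e v = x) /\ (forall v, comb e v = 0 -> v = 0).
Proof.
pose spans n := exists e : 'I_n -> X,
  forall x, exists c : 'I_n -> R, x = \sum_(i < n) c i *: e i.
have [n0 [e0 he0]] := fdX.
have : exists n, `[< spans n >] by exists n0; apply/asboolP; exists e0.
(* a spanning family of minimal length is free *)
case/ex_minnP => n /asboolP [e spans_e] n_min.
exists n, e; split=> [x | v ev0].
  have [c ->] := spans_e x; exists (\row_i c i).
  by apply: eq_bigr => i _; rewrite mxE.
apply/rowP => j; rewrite mxE; apply/eqP/negP => /negP vj.
suff /asboolP /n_min : spans n.-1 by rewrite leqNgt ltn_predL (leq_ltn_trans _ (ltn_ord j)).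
exists (fun k => e (lift j k)) => x; have [c ->] := spans_e x.
exists (fun k => c (lift j k) - c j / v ord0 j * v ord0 (lift j k)).
have -> : \sum_(i < n) c i *: e i =
    \sum_(i < n) (c i - c j / v ord0 j * v ord0 i) *: e i.
  under [RHS]eq_bigr do rewrite scalerBl -scalerA.
  by rewrite sumrB -scaler_sumr -/(comb e v) ev0 scaler0 subr0.
by rewrite (bigD1_ord j) //= divfK // subrr scale0r add0r.
Qed.

Lemma findim_coord : exists n (e : 'I_n -> X) (coord : X -> 'rV[R]_n) (K : R),
  [/\ cancel coord (comb e), cancel (comb e) coord, is_op coord, 0 <= K &
      forall x, `|coord x| <= K * `|x|].
Proof.
have [n [e [spans free]]] := findim_basis.
have comb_inj : injective (comb e).
  move=> v w evw; apply/eqP; rewrite -subr_eq0; apply/eqP/free.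
  by rewrite (opB (comb_is_op e)) evw subrr.
pose coord x := projT1 (cid (spans x)).
have coordK : cancel coord (comb e) by move=> x; exact: projT2 (cid (spans x)).
have combK : cancel (comb e) coord by move=> v; apply: comb_inj; rewrite coordK.
have lin_coord : is_op coord by move=> a x y; apply: comb_inj; rewrite comb_is_op !coordK.
exists n, e, coord.
(* [comb e] is bounded below on the compact unit sphere of ['rV_n] *)
pose S := [set v : 'rV[R]_n | `|v| = 1].
have normalize v : v != 0 -> S (`|v|^-1 *: v).
  by move=> v0; rewrite /S /= normrZ normrV ?unitfE ?normr_eq0 // normr_id mulVf ?normr_eq0.
have [S0 | S0] := pselect (S !=set0); last first.
  exists 0; split=> // x; rewrite mul0r normr_le0; apply: contrapT => /negP cx.
  by apply: S0; exists (`|coord x|^-1 *: coord x); exact: normalize.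
have cS : compact S.
  apply: bounded_closed_compact.
    by exists 1; split => [|M M1 v /= ->]; [exact: num_real | exact: ltW].
  by apply: (@closed_level _ _ (fun v : 'rV[R]_n => `|v|) [set r | r = 1]);
    [exact: norm_continuous | exact: closed_eq].
have ccomb : continuous (fun v => `|comb e v|).
  by move=> v; apply: continuous_comp; [exact: comb_continuous | exact: norm_continuous].
have [v0 /set_mem Sv0 v0_min] := EVT_min_rV S0 cS (continuous_subspaceT ccomb).
have m0 : 0 < `|comb e v0|.
  by rewrite normr_gt0; apply: contraTneq (unit_neq0 Sv0) => /free ->; rewrite eqxx.
exists (`|comb e v0|^-1); split=> // x.
have [-> | cx] := eqVneq (coord x) 0; first by rewrite normr0 mulr_ge0 // invr_ge0 ltW.
have := v0_min _ (mem_set (normalize _ cx)).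
rewrite (opZ (comb_is_op e)) coordK normrZ normrV ?unitfE ?normr_eq0 // normr_id.
by rewrite mulrC ler_pdivlMr ?normr_gt0 // [_^-1 * _]mulrC ler_pdivlMr // mulrC.
Qed.

Lemma findim_bounded_op (Y : normedModType R) (B : X -> Y) : is_op B -> bounded_op B.
Proof.
move=> hB; have [n [e [coord [K [coordK _ _ K0 coord_le]]]]] := findim_coord.
exists ((\sum_(i < n) `|B (e i)|) * K) => x; rewrite -{1}(coordK x) -mulrA.
have -> : B (comb e (coord x)) = comb (fun i => B (e i)) (coord x).
  by rewrite /comb op_sum //; apply: eq_bigr => i _; rewrite opZ.
apply: le_trans (norm_comb_le _ _) _.
by rewrite ler_wpM2l ?sumr_ge0.
Qed.

Lemma findim_closed_bounded_max (f : X -> R) (P : set X) r :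
  continuous f -> closed P -> (forall x, P x -> `|x| <= r) -> P !=set0 ->
  exists2 x, P x & forall y, P y -> f y <= f x.
Proof.
move=> cf cP Pr [p Pp]; have [n [e [coord [K [coordK combK _ K0 coord_le]]]]] := findim_coord.
have cC : compact (comb e @^-1` P).
  apply: bounded_closed_compact; last first.
    by apply: preimage_closed => // v _; exact: comb_continuous.
  exists (K * r); split => [|M Mr v /= Pv]; first exact: num_real.
  rewrite -[v]combK; apply: le_trans (coord_le _) _; apply/ltW/(le_lt_trans _ Mr).
  by rewrite ler_wpM2l // Pr.
have C0 : (comb e @^-1` P) !=set0 by exists (coord p); rewrite /= coordK.
have cfe : continuous (f \o comb e).
  by move=> v; apply: continuous_comp; [exact: comb_continuous | exact: cf].
have [v /set_mem Pv vmax] := EVT_max_rV C0 cC (continuous_subspaceT cfe).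
exists (comb e v) => // y Py; rewrite -(coordK y).
by apply: vmax; rewrite inE /= coordK.
Qed.

Lemma findim_separating_scalar (u0 u1 : X) : u0 != 0 -> (forall c, u1 != c *: u0) ->
  exists h : X -> R, [/\ scalar h, h u0 = 0 & h u1 != 0].
Proof.
move=> u00 indep; have [n [e [coord [K [coordK _ lin_coord _ _]]]]] := findim_coord.
pose a := coord u0; pose b := coord u1.
have /existsP [i ai] : [exists i, a ord0 i != 0].
  apply: contraNT u00 => /existsPn a0; rewrite -(coordK u0) -/a.
  suff -> : a = 0 by rewrite (op0 (comb_is_op e)).
  by apply/rowP => j; rewrite mxE; exact/eqP/negPn/a0.
have [[j hj] | minors0] :=
  pselect (exists j, a ord0 i * b ord0 j - a ord0 j * b ord0 i != 0).
  exists (fun x => a ord0 i * coord x ord0 j - a ord0 j * coord x ord0 i); split => //.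
  - by move=> c x y; rewrite /= lin_coord !mxE; ring.
  - by rewrite -/a mulrC subrr.
exfalso; move: (indep (b ord0 i / a ord0 i)); rewrite -(coordK u1) -(coordK u0) -/a -/b.
rewrite -(opZ (comb_is_op e)) => /negP; apply; apply/eqP; congr comb.
apply/rowP => j; rewrite !mxE.
have /eqP : a ord0 i * b ord0 j - a ord0 j * b ord0 i = 0.
  by apply: contrapT => /eqP hj; apply: minors0; exists j.
by rewrite subr_eq0 => /eqP bj; apply: (mulfI ai); rewrite bj; field.
Qed.

End FiniteDimensional.

Section FiniteDimensionalOperators.
Variables (R : realType) (X Y : normedModType R).
Hypothesis fdX : findim X.
Implicit Types (A B T : X -> Y) (x : X).

Let fin_bounded B : is_op B -> bounded_op B := findim_bounded_op fdX (B := B).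

Lemma continuous_norm_op B : is_op B -> continuous (fun x => `|B x|).
Proof.
move=> hB; have cB := bounded_op_continuous hB (fin_bounded hB).
by move=> x; apply: continuous_comp; [exact: cB | exact: norm_continuous].
Qed.

Lemma opnorm_attained B : is_op B -> exists2 x, `|x| <= 1 & `|B x| = opnorm B.
Proof.
move=> hB; have ball0 : [set x : X | `|x| <= 1] !=set0 by exists 0; rewrite /= normr0.
have [x x1 xmax] := findim_closed_bounded_max fdX (continuous_norm_op hB)
  (@closed_norm_le R X 1) (fun x (x1 : `|x| <= 1) => x1) ball0.
exists x => //; apply/eqP; rewrite eq_le (opnorm_ub (fin_bounded hB)) //=.
by apply: opnorm_le => y /xmax.
Qed.

Lemma unit_norm_attained T : is_op T -> opnorm T = 1 ->
  exists2 x0, `|x0| = 1 & `|T x0| = 1.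
Proof.
move=> hT nT; have [x0 x01] := opnorm_attained hT; rewrite nT => nTx0.
exists x0 => //; apply/eqP; rewrite eq_le x01 -[X in X <= _]nTx0.
exact: opnorm1_le hT (fin_bounded hT) nT x0.
Qed.

Section OpDual.
Variable Phi : (X -> Y) -> R.
Hypothesis hPhi : op_dual_elt Phi.

Lemma op_dualD A B : is_op A -> is_op B -> Phi (fun x => A x + B x) = Phi A + Phi B.
Proof.
move=> hA hB; rewrite -[Phi A]mul1r -hPhi.1 //.
by congr Phi; apply: funext => x; rewrite scale1r.
Qed.

Lemma op_dual0 : Phi (fun _ => 0) = 0.
Proof.
apply: (@addrI _ (Phi (fun _ => 0))); rewrite addr0 -(op_dualD is_op0 is_op0).
by congr Phi; apply: funext => x; rewrite addr0.
Qed.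

Lemma op_dualZ A a : is_op A -> Phi (fun x => a *: A x) = a * Phi A.
Proof.
move=> hA; rewrite -[RHS]addr0 -op_dual0 -(hPhi.1 a _ _ hA is_op0).
by congr Phi; apply: funext => x; rewrite addr0.
Qed.

Lemma op_dual_norm_ub A : is_op A -> opnorm A <= 1 -> `|Phi A| <= op_dual_norm Phi.
Proof.
move=> hA nA; apply: ub_le_sup; last by exists A.
have [M PhiM] := hPhi.2; exists `|M| => _ [B [hB nB] <-]; apply: le_trans (PhiM B hB) _.
apply: le_trans (ler_wpM2r (opnorm_ge0 (fin_bounded hB)) (ler_norm M)) _.
by rewrite ler_piMr.
Qed.

Lemma op_dual_norm1_le A : op_dual_norm Phi = 1 -> is_op A -> `|Phi A| <= opnorm A.
Proof.
move=> nPhi hA; have nA0 := opnorm_ge0 (fin_bounded hA).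
have [nA_eq0 | nA_neq0] := eqVneq (opnorm A) 0.
  by have [M PhiM] := hPhi.2; apply: le_trans (PhiM A hA) _; rewrite nA_eq0 mulr0.
have nA_gt0 : 0 < opnorm A by rewrite lt_neqAle eq_sym nA_neq0.
have := op_dual_norm_ub (is_op_scale (opnorm A)^-1 hA).
rewrite nPhi op_dualZ // normrM ger0_norm ?invr_ge0 // mulrC ler_pdivrMr // mul1r; apply.
apply: opnorm_le => x x1; rewrite normrZ ger0_norm ?invr_ge0 // mulrC ler_pdivrMr // mul1r.
exact: opnorm_ub (fin_bounded hA) x x1.
Qed.

End OpDual.

Lemma eval_op_norming A u g : is_op A -> opnorm A = 1 -> `|u| = 1 -> `|A u| = 1 ->
  norming_functional (A u) g -> op_norming_functional A (fun B => g (B u)).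
Proof.
move=> hA nA nu nAu hg; have [[lin_g _] [_ gAu]] := hg.
have bnd B : is_op B -> `|g (B u)| <= opnorm B.
  move=> hB; rewrite -[opnorm B]mulr1 -nu.
  exact: le_trans (norming_functional_le hg _) (opnorm_bound hB (fin_bounded hB) u).
have dual : op_dual_elt (fun B => g (B u)).
  by split; [move=> a B C _ _; rewrite /= lin_g | exists 1 => B hB; rewrite mul1r; exact: bnd].
split => //; split; last by rewrite gAu nAu nA.
apply/eqP; rewrite eq_le op_dual_norm_le /=; last by move=> B hB /(le_trans (bnd B hB)).
by have := op_dual_norm_ub dual hA; rewrite nA lexx gAu nAu normr1; apply.
Qed.

Hypothesis smY : smooth_space Y.

Lemma op_smooth_norm_attained_only_at A u0 : op_smooth_point A -> opnorm A = 1 ->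
  `|u0| = 1 -> `|A u0| = 1 -> norm_attained_only_at A u0.
Proof.
move=> [hA [_ [_ uniq]]] nA nu0 nAu0; split => // u1 nu1 nAu1.
have [g0 [hg0 _]] := (smY (unit_neq0 nAu0)).2.
have [g1 [hg1 _]] := (smY (unit_neq0 nAu1)).2.
have same B : is_op B -> g0 (B u0) = g1 (B u1).
  exact: uniq (eval_op_norming hA nA nu0 nAu0 hg0) (eval_op_norming hA nA nu1 nAu1 hg1) B.
have [[c u1E] | indep] := pselect (exists c, u1 = c *: u0).
  move: nu1; rewrite u1E normrZ nu0 mulr1; case: ler0P => _ c1; [right | left].
    by rewrite -[c]opprK c1 scaleN1r.
  by rewrite c1 scale1r.
have {}indep c : u1 != c *: u0 by apply/eqP => u1E; apply: indep; exists c.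
have [h [lin_h hu0 hu1]] := findim_separating_scalar fdX (unit_neq0 nu0) indep.
have := same _ (is_op_rank_one (A u1) lin_h).
rewrite /= (scalar_funZ hg0.1.1) (scalar_funZ hg1.1.1) hu0 mul0r hg1.2.2 nAu1 mulr1.
by move=> /esym/eqP; rewrite (negbTE hu1).
Qed.

Section NormAttainedOnlyAt.
Variables (T : X -> Y) (x0 : X).
Hypotheses (hT : is_op T) (nT : opnorm T = 1) (MT : norm_attained_only_at T x0).

Lemma near_norming_near_pm eta : 0 < eta -> exists2 delta, 0 < delta &
  forall x, `|x| <= 1 -> 1 - delta < `|T x| -> `|x - x0| < eta \/ `|x + x0| < eta.
Proof.
move=> eta0; have [nx0 _ only] := MT.
have far_closed c : closed [set x : X | eta <= `|x + c|].
  apply: (@closed_level _ _ (fun x => `|x + c|) [set r | eta <= r]); last exact: closed_ge.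
  move=> x; apply: (@continuous_comp _ _ _ (fun x : X => x + c) (Num.norm : X -> R)).
    by apply: cvgD; [exact: cvg_id | exact: cvg_cst].
  exact: norm_continuous.
pose P := [set x : X | `|x| <= 1] `&`
          ([set x | eta <= `|x - x0|] `&` [set x | eta <= `|x + x0|]).
have nearP x : `|x| <= 1 -> ~ P x -> `|x - x0| < eta \/ `|x + x0| < eta.
  move=> x1 Px; case: (ltP `|x - x0| eta) => [|h1]; first by left.
  by case: (ltP `|x + x0| eta) => [|h2]; [right | exfalso; apply: Px].
have [P0 | P0] := pselect (P !=set0); last first.
  by exists 1 => // x x1 _; apply: nearP => // Px; apply: P0; exists x.
have cP : closed P.
  by apply: closedI; [exact: closed_norm_le | apply: closedI; exact: far_closed].
have [xs Pxs xs_max] := findim_closed_bounded_max fdX (continuous_norm_op hT) cP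
  (fun x (Px : P x) => Px.1) P0.
have Txs : `|T xs| < 1.
  rewrite lt_neqAle -[X in _ <= X]nT (opnorm_ub (fin_bounded hT)) ?Pxs.1 // andbT.
  apply/eqP => Txs1; have nxs : `|xs| = 1.
    by apply/eqP; rewrite eq_le Pxs.1 -Txs1 (opnorm1_le hT (fin_bounded hT) nT).
  have [_ [far1 far2]] := Pxs; case: (only xs nxs Txs1) => xsE.
    by move: far1; rewrite /= xsE subrr normr0 leNgt eta0.
  by move: far2; rewrite /= xsE addNr normr0 leNgt eta0.
exists (1 - `|T xs|); first by rewrite subr_gt0.
move=> x x1 Tx; apply: nearP => // Px; move: (xs_max x Px); rewrite leNgt.
by move: Tx; rewrite opprB addrCA subrr addr0 => ->.
Qed.

(* [B] is small on the almost-norming vectors of [T], which lie near [+-x0]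
   where [B] vanishes; on the other vectors [T] has room to spare. *)
Lemma opnorm_add_vanishing B e : is_op B -> B x0 = 0 -> 0 < e ->
  exists2 s, 0 < s & opnorm (fun x => s *: B x + T x) <= 1 + s * e.
Proof.
move=> hB Bx0 e0; have L0 := opnorm_ge0 (fin_bounded hB); set L := opnorm B in L0 *.
have L1 : 0 < L + 1 by lra.
pose eta := e / (L + 1); have eta0 : 0 < eta by rewrite divr_gt0.
have Leta : L * eta + eta = e by rewrite -[eta in _ + eta]mul1r -mulrDl mulrC divfK ?gt_eqF.
have [d d0 near] := near_norming_near_pm eta0.
pose s := d / (L + 1); have s0 : 0 < s by rewrite divr_gt0.
have sL : s * L + s = d by rewrite -[s in _ + s]mulr1 -mulrDr divfK ?gt_eqF.
exists s => //; apply: opnorm_le => x x1.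
have Tx1 : `|T x| <= 1 by rewrite -nT; exact: opnorm_ub (fin_bounded hT) x x1.
have B_le y : `|B y| <= L * `|y| := opnorm_bound hB (fin_bounded hB) y.
apply: le_trans (ler_normD _ _) _; rewrite normrZ gtr0_norm //.
have [/(near x x1) near_x0 | far] := ltP (1 - d) `|T x|.
  have Bx : `|B x| <= L * eta.
    case: near_x0 => xx0.
      rewrite -[x](subrK x0) (opD hB) Bx0 addr0.
      exact: le_trans (B_le _) (ler_wpM2l L0 (ltW xx0)).
    rewrite -[x](addrK x0) (opB hB) Bx0 subr0.
    exact: le_trans (B_le _) (ler_wpM2l L0 (ltW xx0)).
  have : s * `|B x| <= s * e by rewrite ler_pM2l //; lra.
  lra.
have : s * `|B x| <= s * L by rewrite ler_pM2l // (le_trans (B_le x)) ?ler_piMr.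
have : 0 <= s * e by rewrite mulr_ge0 ?ltW.
lra.
Qed.

Lemma op_norming_vanish Phi B : op_norming_functional T Phi -> is_op B -> B x0 = 0 ->
  Phi B = 0.
Proof.
move=> [hPhi [nPhi PhiT]].
suff le0 C : is_op C -> C x0 = 0 -> Phi C <= 0.
  move=> hB Bx0; apply/eqP; rewrite eq_le le0 //= -oppr_le0 -mulN1r -op_dualZ //.
  by apply: le0; [exact: is_op_scale | rewrite Bx0 scaler0].
move=> hC Cx0; apply/ler_addgt0Pr => e e0; rewrite add0r.
have [s s0 sC] := opnorm_add_vanishing hC Cx0 e0.
have : Phi (fun x => s *: C x + T x) <= 1 + s * e.
  apply: le_trans (ler_norm _) (le_trans _ sC).
  by have := op_dual_norm1_le hPhi nPhi (is_op_comb s hC hT).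
by rewrite hPhi.1 // PhiT nT addrC lerD2l ler_pM2l.
Qed.

Lemma uniform_BPB_approx_of_close A eps : is_op A -> opnorm A = 1 -> `|A x0| = 1 ->
  opnorm (fun x => A x - T x) < eps -> 0 < eps -> uniform_BPB_approx T A eps.
Proof.
move=> hA nA nAx0 dAT e0; have [nx0 _ _] := MT.
have [d d0 near] := near_norming_near_pm e0.
split => //; split => //; exists d; split => // x nx Tx.
have x1 : `|x| <= 1 by rewrite nx.
have [xx0 | xx0] := near x x1 Tx; first by exists x0; rewrite distrC.
by exists (- x0); rewrite normrN nx0 (opN hA) normrN nAx0 -opprD normrN addrC.
Qed.

Section NormingFunctional.
Variable g : Y -> R.
Hypothesis hg : norming_functional (T x0) g.

Let lin_f : scalar (fun x => g (T x)) := scalar_comp hg.1.1 hT.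

Let f_le x : `|g (T x)| <= `|x|.
Proof. exact: le_trans (norming_functional_le hg _) (opnorm1_le hT (fin_bounded hT) nT x). Qed.

Let fx0 : g (T x0) = 1.
Proof. by have [_ nTx0 _] := MT; rewrite hg.2.2 nTx0. Qed.

(* [B] differs from [g (T .) *: B x0] by an operator vanishing at [x0]. *)
Lemma op_norming_eval_factor Phi B : op_norming_functional T Phi -> is_op B ->
  Phi B = Phi (fun x => g (T x) *: B x0).
Proof.
move=> hN hB; have rank1 := is_op_rank_one (B x0) lin_f.
have rest := is_op_comb (-1) rank1 hB.
rewrite {1}(_ : B = fun x => g (T x) *: B x0 + (-1 *: (g (T x) *: B x0) + B x)); last first.
  by apply: funext => x; rewrite scaleN1r addNKr.
rewrite (op_dualD hN.1 rank1 rest) (op_norming_vanish hN rest) ?addr0 //=.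
by rewrite fx0 scale1r scaleN1r addNr.
Qed.

Lemma op_norming_restrict Phi : op_norming_functional T Phi ->
  norming_functional (T x0) (fun y => Phi (fun x => g (T x) *: y)).
Proof.
move=> hN; have [[hPhi [nPhi PhiT]] [nx0 nTx0 _]] := (hN, MT).
have psi_le y : `|Phi (fun x => g (T x) *: y)| <= `|y|.
  apply: le_trans (op_dual_norm1_le hPhi nPhi (is_op_rank_one y lin_f)) _.
  by apply: opnorm_le => x x1; rewrite normrZ ler_piMl // (le_trans (f_le x)).
have psiT : Phi (fun x => g (T x) *: T x0) = 1.
  by rewrite -op_norming_eval_factor // PhiT nT.
split; first split.
- move=> a y y'.
  rewrite /= -(hPhi.1 a _ _ (is_op_rank_one y lin_f) (is_op_rank_one y' lin_f)).
  by congr Phi; apply: funext => x; rewrite scalerDr !scalerA mulrC.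
- by exists 1 => y; rewrite mul1r.
split; last by rewrite psiT nTx0.
by apply: (opnorm1_attained (Y := R^o) psi_le nTx0); rewrite psiT normr1.
Qed.

Lemma rank_one_perturbation eps : dim_gt1 Y -> (forall x, T x = g (T x) *: T x0) ->
  0 < eps ->
  exists A, [/\ A <> T, is_op A, opnorm A = 1, opnorm (fun x => A x - T x) < eps &
                norm_attained_only_at A x0].
Proof.
move=> dY rank1 e0; have [nx0 nTx0 only] := MT.
have [y [ny yT yTx0]] := exists_unit_near dY nTx0 e0.
pose A x := g (T x) *: y.
have AT x : `|A x| = `|T x| by rewrite /A [in RHS]rank1 !normrZ ny nTx0.
have nAx0 : `|A x0| = 1 by rewrite AT.
exists A; split.
- move=> /(congr1 (fun B => B x0)); rewrite /A fx0 scale1r => /eqP.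
  by rewrite (negbTE yT).
- exact: is_op_rank_one.
- apply: (opnorm1_attained _ nx0 nAx0) => x.
  by rewrite AT (opnorm1_le hT (fin_bounded hT) nT).
- apply: le_lt_trans yTx0; apply: opnorm_le => x x1.
  by rewrite /A {2}rank1 -scalerBr normrZ ler_piMl // (le_trans (f_le x)).
- by split=> // x nx; rewrite AT => /(only x nx).
Qed.

Lemma generic_perturbation eps : ~ (forall x, T x = g (T x) *: T x0) -> 0 < eps ->
  exists A, [/\ A <> T, is_op A, opnorm A = 1, opnorm (fun x => A x - T x) < eps &
                norm_attained_only_at A x0].
Proof.
move=> not_rank1 e0; have [nx0 nTx0 only] := MT.
pose t := Num.min (1 / 2) (eps / 4).
have t0 : 0 < t by rewrite lt_min !divr_gt0.
have t_half : t <= 1 / 2 by rewrite ge_min lexx.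
have t_eps : t <= eps / 4 by rewrite ge_min lexx orbT.
pose A x := (1 - t) *: T x + g (T x) *: (t *: T x0).
have Ax0 : A x0 = T x0 by rewrite /A fx0 scale1r -scalerDl subrK scale1r.
have T_le x : `|T x| <= `|x| := opnorm1_le hT (fin_bounded hT) nT x.
have A_le x : `|A x| <= (1 - t) * `|T x| + t * `|x|.
  apply: le_trans (ler_normD _ _) _.
  rewrite !normrZ nTx0 mulr1 (gtr0_norm t0) (@ger0_norm _ (1 - t)); last lra.
  by rewrite lerD2l mulrC ler_pM2l // f_le.
exists A; split.
- move=> AT; apply: not_rank1 => x; apply: (scalerI (lt0r_neq0 t0)).
  have /(congr1 (fun B => B x)) := AT; rewrite /A /= scalerBl scale1r => ATx.
  rewrite scalerA mulrC -scalerA; apply: (@addrI _ (T x - t *: T x)).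
  by rewrite subrK ATx.
- exact: is_op_comb (1 - t) hT (is_op_rank_one _ lin_f).
- apply: (opnorm1_attained _ nx0); last by rewrite Ax0.
  move=> x; apply: le_trans (A_le x) _; have := T_le x; have : 0 <= `|x| by [].
  nra.
- apply: (@le_lt_trans _ _ (2 * t)); last by lra.
  apply: opnorm_le => x x1.
  have -> : A x - T x = g (T x) *: (t *: T x0) - t *: T x.
    by rewrite /A scalerBl scale1r addrAC [T x - _ - _]addrAC subrr add0r addrC.
  apply: le_trans (ler_normB _ _) _; rewrite !normrZ nTx0 mulr1 (gtr0_norm t0).
  have := ler_piMl (ltW t0) (le_trans (f_le x) x1).
  have := ler_piMr (ltW t0) (le_trans (T_le x) x1).
  lra.
- split=> //; first by rewrite Ax0.
  move=> x nx nAx; apply: only => //; apply/eqP; rewrite eq_le -{1}nx T_le /=.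
  have := A_le x; rewrite nAx nx; nra.
Qed.

Lemma exists_perturbation eps : dim_gt1 Y -> 0 < eps ->
  exists A, [/\ A <> T, is_op A, opnorm A = 1, opnorm (fun x => A x - T x) < eps &
                norm_attained_only_at A x0].
Proof.
move=> dY e0; have [rank1 | not_rank1] := pselect (forall x, T x = g (T x) *: T x0).
  exact: rank_one_perturbation.
exact: generic_perturbation.
Qed.

End NormingFunctional.

Lemma norm_attained_only_at_op_smooth : op_smooth_point T.
Proof.
have [nx0 nTx0 _] := MT; have [g [hg g_uniq]] := (smY (unit_neq0 nTx0)).2.
suff evalE Phi : op_norming_functional T Phi -> forall B, is_op B -> Phi B = g (B x0).
  split=> //; split; first by exists x0; exact: unit_neq0.
  split; first by exists (fun B => g (B x0)); exact: eval_op_norming.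
  by move=> Phi1 Phi2 h1 h2 B hB; rewrite !evalE.
move=> hN B hB; rewrite (op_norming_eval_factor hg hN hB).
by have /(congr1 (fun k => k (B x0))) /= -> := g_uniq _ (op_norming_restrict hg hN).
Qed.

End NormAttainedOnlyAt.

Lemma smooth_BPB_approx_near_pm T A eps x0 x1 : op_smooth_point A ->
  uniform_BPB_approx T A eps -> `|x0| = 1 -> `|T x0| = 1 -> `|x1| = 1 -> `|T x1| = 1 ->
  `|x1 - x0| < 2 * eps \/ `|x1 + x0| < 2 * eps.
Proof.
move=> sA [_ [nA [d [d0 approx]]]] nx0 nTx0 nx1 nTx1.
have near_attaining x : `|x| = 1 -> `|T x| = 1 ->
    exists u, [/\ `|u| = 1, `|A u| = 1 & `|u - x| < eps].
  move=> nx nTx; have Tx : `|T x| > 1 - d by rewrite nTx ltrBlDr ltrDl.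
  by have [u [nu [nAu [ux _]]]] := approx x nx Tx; exists u.
have [u0 [nu0 nAu0 u0x0]] := near_attaining _ nx0 nTx0.
have [u1 [nu1 nAu1 u1x1]] := near_attaining _ nx1 nTx1.
have [_ _ only] := op_smooth_norm_attained_only_at sA nA nu0 nAu0.
case: (only u1 nu1 nAu1) => u1E; rewrite u1E in u1x1; [left | right].
  by apply: le_lt_trans (ler_distD u0 x1 x0) _; rewrite [`|x1 - u0|]distrC; lra.
have -> : x1 + x0 = - ((- u0 - x1) + (u0 - x0)).
  by rewrite addrACA addNr add0r opprD !opprK.
by rewrite normrN; apply: le_lt_trans (ler_normD _ _) _; lra.
Qed.

End FiniteDimensionalOperators.

Unset Implicit Arguments.
Set Strict Implicit.

Theorem theorem2p8 (R : realType) (X Y : normedModType R)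
  (fdX : findim X) (fdY : findim Y) (dX : dim_gt1 X) (dY : dim_gt1 Y)
  (scX : strictly_convex X) (smY : smooth_space Y)
  (T : X -> Y) (linT : is_op T) (nT : opnorm T = 1) :
  op_smooth_point T <->
  (forall eps : R, 0 < eps ->
     exists A : X -> Y, A <> T /\ uniform_BPB_approx T A eps /\
                        op_smooth_point A).
Proof.
have [x0 nx0 nTx0] := unit_norm_attained fdX linT nT.
split=> [sT eps eps0 | approx].
  have MT := op_smooth_norm_attained_only_at fdX smY sT nT nx0 nTx0.
  have [g [hg _]] := (smY _ (unit_neq0 nTx0)).2.
  have [A [AT hA nA dAT MA]] := exists_perturbation fdX linT nT MT hg dY eps0.
  have [_ nAx0 _] := MA.
  exists A; split=> //; split.
    exact (uniform_BPB_approx_of_close fdX linT nT MT hA nA nAx0 dAT eps0).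
  exact (norm_attained_only_at_op_smooth fdX smY hA nA MA).
apply: (norm_attained_only_at_op_smooth fdX smY linT nT (x0 := x0)).
split=> // x1 nx1 nTx1; apply: eq_or_eq_opp_of_near => e e0.
have [A [_ [BPB sA]]] := approx (e / 2) (divr_gt0 e0 (ltr0Sn _ 1)).
have := smooth_BPB_approx_near_pm fdX smY sA BPB nx0 nTx0 nx1 nTx1.
by rewrite mulrC divfK.
Qed.
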